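(* There exists a family of nonnegative constants $(m^\epsilon(j))_{\epsilon>0,\,j\in\mathbb{N}}$ such that: (1) for all sufficiently small $\epsilon>0$ and every $j\in\mathbb{N}$, one has $\tau_i^\epsilon(x)<m^\epsilon(j)$ for every $i\in\{0,1\}$ and every $x\in V_{1-i}^\epsilon(j)$; (2) $\lim_{\epsilon\downarrow0}\sum_{j=1}^\infty j\,e^{\nu j}m^\epsilon(j)=0$ for every $\nu\in[0,\alpha)$.
   Context: Fix $\alpha>\beta>0$. For $i\in\{0,1\}$ let $\Phi_i^t(x)=(i+(x_1-i)e^{-\alpha t},i+(x_2-i)e^{-\beta t})$ and $\Psi_i^t=\Phi_i^{-t}$. Let $\Gamma=\{(x_1,x_2):0\le x_2\le1,\ x_2^{\alpha/\beta}\le x_1\le1-(1-x_2)^{\alpha/\beta}\}$, $\Gamma^\circ$ its interior, and $D(x)=\alpha\beta(x_1-x_2)$. For $\epsilon>0$, $i\in\{0,1\}$ and $x\in\Gamma^\circ$ with $|D(x)|<\epsilon$, let $\tau_i^\epsilon(x)=\min\big(\sup\{t\ge0:|D(\Psi_i^tx)|<\epsilon\},\ \sup\{t\ge0:\Psi_i^t(x)\in\Gamma^\circ\}\big)$. For integers $j\ge2$ let $V_i^\epsilon(j)=\{x\in\Gamma^\circ:|D(x)|<\epsilon,\ \tau_i^\epsilon(x)\in(j-1,j]\}$, and let $V_i^\epsilon(1)=\{x\in\Gamma^\circ:|D(x)|<\epsilon,\ \tau_i^\epsilon(x)\in(\epsilon^{\beta/\alpha},1]\}$. Here $\mathbb{N}=\{1,2,\dots\}$.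 *)

From Stdlib Require Import Reals.
From Coquelicot Require Import Coquelicot.
Open Scope R_scope.

(* Real power y^a for y >= 0 and a > 0, with the convention 0^a = 0
   (Stdlib's Rpower 0 a would be 1, which is wrong here). *)
Definition pw (y a : R) : R := if Rlt_dec 0 y then Rpower y a else 0.

(* i in {0,1} is encoded as a boolean; iR false = 0, iR true = 1. *)
Definition iR (i : bool) : R := if i then 1 else 0.

Definition Phi (alpha beta : R) (i : bool) (t : R) (x : R * R) : R * R :=
  (iR i + (fst x - iR i) * exp (- alpha * t),
   iR i + (snd x - iR i) * exp (- beta * t)).

Definition Psi (alpha beta : R) (i : bool) (t : R) (x : R * R) : R * R :=
  Phi alpha beta i (- t) x.

Definition Gamma (alpha beta : R) (x : R * R) : Prop :=
  0 <= snd x <= 1 /\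
  pw (snd x) (alpha / beta) <= fst x <= 1 - pw (1 - snd x) (alpha / beta).

Definition GammaInt (alpha beta : R) (x : R * R) : Prop :=
  exists r : R, 0 < r /\
    forall y : R * R, Rabs (fst y - fst x) < r -> Rabs (snd y - snd x) < r ->
      Gamma alpha beta y.

Definition D (alpha beta : R) (x : R * R) : R := alpha * beta * (fst x - snd x).

Definition tau (alpha beta eps : R) (i : bool) (x : R * R) : Rbar :=
  Rbar_min
    (Lub_Rbar (fun t => 0 <= t /\ Rabs (D alpha beta (Psi alpha beta i t x)) < eps))
    (Lub_Rbar (fun t => 0 <= t /\ GammaInt alpha beta (Psi alpha beta i t x))).

Definition V (alpha beta eps : R) (i : bool) (j : nat) (x : R * R) : Prop :=
  GammaInt alpha beta x /\ Rabs (D alpha beta x) < eps /\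
  (if (j <=? 1)%nat
   then Rbar_lt (Finite (Rpower eps (beta / alpha))) (tau alpha beta eps i x)
   else Rbar_lt (Finite (INR j - 1)) (tau alpha beta eps i x)) /\
  Rbar_le (tau alpha beta eps i x) (Finite (INR j)).

(* A point x of V_{1-i}^eps(j) has a backward Psi_{1-i} orbit that stays in the interior of
   Gamma for a time > j - 1 and keeps |D| < eps for a time > eps^(beta/alpha).  The first
   fact gives |x1 - (1-i)| <= e^(-alpha (j-1)).  For the second, the offsets x1 - (1-i) and
   x2 - (1-i) start eps-close but grow at the distinct rates alpha > beta, which forces
   |x1 - (1-i)| <= 2 eps^(1 - beta/alpha) / (alpha beta (alpha - beta)).  So x is within u,
   the smaller of the two bounds, of the line x1 = 1 - i, and under Psi_i the first
   coordinate leaves [0,1] before time 2u/alpha: m^eps(j) = 3u/alpha works.  For the series,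
   min(a, b) <= a^theta b^(1-theta) with theta small turns it into a geometric series times
   a positive power of eps. *)

From Pilot Require Import Defs.
From Stdlib Require Import Reals Lra Lia Psatz Classical.
From Coquelicot Require Import Coquelicot.
Open Scope R_scope.

Lemma exp_le_compat (x y : R) : x <= y -> exp x <= exp y.
Proof. intros [Hlt|Heq]; [left; apply exp_increasing; lra | subst; lra]. Qed.

Lemma exp_mul_INR (c : R) (n : nat) : exp (c * INR n) = exp c ^ n.
Proof.
  rewrite <- Rpower_pow by apply exp_pos.
  unfold Rpower; rewrite ln_exp, Rmult_comm; reflexivity.
Qed.

Lemma Rmin_le_convex (x y theta : R) :
  0 <= theta <= 1 -> Rmin x y <= theta * x + (1 - theta) * y.
Proof. intros Ht; pose proof (Rmin_l x y); pose proof (Rmin_r x y); nra. Qed.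

Lemma Lub_Rbar_gt_witness (E : R -> Prop) (L : R) :
  Rbar_lt (Finite L) (Lub_Rbar E) -> exists t, E t /\ L < t.
Proof.
  intros HL. apply NNPP; intros Hno.
  apply (Rbar_lt_not_le _ _ HL), (proj2 (Lub_Rbar_correct E)).
  intros t Et; simpl. apply Rnot_lt_le; intros Hlt; eauto.
Qed.

Lemma Lub_Rbar_le_of_ub (E : R -> Prop) (B : R) :
  (forall t, E t -> t <= B) -> Rbar_le (Lub_Rbar E) (Finite B).
Proof. intros HB; apply (proj2 (Lub_Rbar_correct E)); exact HB. Qed.

Lemma is_series_geom_dominated (f : nat -> R) (C q : R) :
  0 <= q < 1 -> (forall n, 0 <= f n <= C * q ^ n) ->
  exists s, is_series f s /\ 0 <= s <= C / (1 - q).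
Proof.
  intros Hq Hf.
  assert (Hgeom : is_series (fun n => C * q ^ n) (C / (1 - q))).
  { apply (is_series_scal_l C (fun n => q ^ n) (/ (1 - q))), is_series_geom.
    rewrite Rabs_pos_eq; lra. }
  assert (Hex : ex_series f).
  { apply (ex_series_le f (fun n => C * q ^ n)); [|eexists; exact Hgeom].
    intros n; change (norm (f n)) with (Rabs (f n)).
    rewrite Rabs_pos_eq; apply Hf. }
  exists (Series f); split; [apply Series_correct, Hex|split].
  - replace 0 with (Series (fun n => 0 * f n)) by (rewrite Series_scal_l; ring).
    apply Series_le; [intros n; pose proof (Hf n); lra | exact Hex].
  - rewrite <- (is_series_unique _ _ Hgeom).
    apply Series_le; [exact Hf | eexists; exact Hgeom].
Qed.

Lemma exp_separation_bound (alpha beta t a b e : R) :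
  0 < beta < alpha -> 0 <= t ->
  Rabs (a * exp (alpha * t) - b * exp (beta * t)) < e -> Rabs (b - a) < e ->
  Rabs a * ((alpha - beta) * t) < 2 * e.
Proof.
  intros Hab Ht Hfar Hnear.
  set (E := exp (beta * t)) in *.
  set (F := exp ((alpha - beta) * t)).
  assert (HEF : exp (alpha * t) = E * F).
  { unfold E, F; rewrite <- exp_plus; f_equal; ring. }
  rewrite HEF in Hfar.
  assert (HE : 1 <= E).
  { pose proof (exp_ineq1_le (beta * t)); unfold E; nra. }
  assert (HF : 1 + (alpha - beta) * t <= F) by apply exp_ineq1_le.
  assert (HF1 : 1 <= F) by nra.
  assert (Hgap : Rabs a * (E * F - E) <= Rabs (a * (E * F) - b * E) + Rabs (b - a) * E).
  { rewrite <- (Rabs_pos_eq (E * F - E)), <- Rabs_mult by nra.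
    replace (a * (E * F - E)) with ((a * (E * F) - b * E) + (b - a) * E) by ring.
    eapply Rle_trans; [apply Rabs_triang|].
    rewrite Rabs_mult, (Rabs_pos_eq E) by lra; lra. }
  pose proof (Rabs_pos a). pose proof (Rabs_pos (b - a)).
  assert (Hlow : Rabs a * E * ((alpha - beta) * t) <= Rabs a * (E * F - E)).
  { rewrite Rmult_assoc; apply Rmult_le_compat_l; nra. }
  assert (Hup : Rabs a * (E * F - E) < E * (2 * e)).
  { assert (Rabs (b - a) * E <= e * E) by (apply Rmult_le_compat_r; lra). nra. }
  apply (Rmult_lt_reg_l E); lra.
Qed.

Section Flow.

Variables alpha beta : R.
Hypothesis Hbeta : 0 < beta.
Hypothesis Hbeta_alpha : beta < alpha.

Lemma Psi_fst (i : bool) (t : R) (x : R * R) :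
  fst (Psi alpha beta i t x) = iR i + (fst x - iR i) * exp (alpha * t).
Proof. unfold Psi, Phi; simpl; replace (- alpha * - t) with (alpha * t) by ring; reflexivity. Qed.

(* Coquelicot exports its own [D], hence the qualified name [Defs.D]. *)
Lemma D_Psi (i : bool) (t : R) (x : R * R) :
  Defs.D alpha beta (Psi alpha beta i t x) =
  alpha * beta * ((fst x - iR i) * exp (alpha * t) - (snd x - iR i) * exp (beta * t)).
Proof.
  unfold Defs.D, Psi, Phi; simpl.
  replace (- alpha * - t) with (alpha * t) by ring.
  replace (- beta * - t) with (beta * t) by ring. ring.
Qed.

Lemma GammaInt_fst (p : R * R) : GammaInt alpha beta p -> 0 <= fst p <= 1.
Proof.
  intros [r [Hr Hball]].
  destruct (Hball p) as [_ Hx]; try (rewrite Rminus_eq_0, Rabs_R0; exact Hr).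
  assert (forall y a, 0 <= pw y a) as Hpw.
  { intros y a; unfold pw; destruct Rlt_dec; [left; apply exp_pos | lra]. }
  pose proof (Hpw (snd p) (alpha / beta)); pose proof (Hpw (1 - snd p) (alpha / beta)).
  lra.
Qed.

Lemma Psi_fst_offset (i : bool) (t : R) (x : R * R) :
  0 <= fst (Psi alpha beta i t x) <= 1 -> Rabs (fst x - iR i) * exp (alpha * t) <= 1.
Proof.
  rewrite Psi_fst; pose proof (exp_pos (alpha * t)).
  destruct i; simpl; unfold Rabs; destruct Rcase_abs; nra.
Qed.

Lemma tau_gt_witnesses (eps : R) (i : bool) (x : R * R) (L : R) :
  Rbar_lt (Finite L) (tau alpha beta eps i x) ->
  (exists t, L < t /\ 0 <= t /\ Rabs (Defs.D alpha beta (Psi alpha beta i t x)) < eps) /\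
  (exists t, L < t /\ 0 <= t /\ GammaInt alpha beta (Psi alpha beta i t x)).
Proof.
  unfold tau; intros HL; split.
  - pose proof (Rbar_lt_le_trans _ _ _ HL (Rbar_min_l _ _)) as HLD.
    destruct (Lub_Rbar_gt_witness _ _ HLD) as [t [[Ht HD] HLt]]; eauto.
  - pose proof (Rbar_lt_le_trans _ _ _ HL (Rbar_min_r _ _)) as HLG.
    destruct (Lub_Rbar_gt_witness _ _ HLG) as [t [[Ht HG] HLt]]; eauto.
Qed.

Lemma tau_lt_of_offset (eps : R) (i : bool) (x : R * R) (u : R) :
  GammaInt alpha beta x -> Rabs (fst x - iR (negb i)) <= u -> 0 < u <= 1/2 ->
  Rbar_lt (tau alpha beta eps i x) (Finite (3 / alpha * u)).
Proof.
  intros Hx Hu Hu_half.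
  assert (Hfar : 1 - u <= Rabs (fst x - iR i)).
  { apply GammaInt_fst in Hx; revert Hu.
    destruct i; simpl; unfold Rabs; do 2 destruct Rcase_abs; lra. }
  unfold tau; eapply Rbar_le_lt_trans; [apply Rbar_min_r|].
  eapply Rbar_le_lt_trans; [apply (Lub_Rbar_le_of_ub _ (2 * u / alpha))|].
  - intros t [Ht HG]; apply GammaInt_fst, Psi_fst_offset in HG.
    pose proof (exp_ineq1_le (alpha * t)).
    assert (alpha * t <= 2 * u) by nra.
    apply (Rmult_le_reg_l alpha); [lra|].
    replace (alpha * (2 * u / alpha)) with (2 * u) by (field; lra); lra.
  - simpl; apply (Rmult_lt_reg_l alpha); [lra|].
    replace (alpha * (2 * u / alpha)) with (2 * u) by (field; lra).
    replace (alpha * (3 / alpha * u)) with (3 * u) by (field; lra); lra.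
Qed.

Lemma offset_lt_of_D_window (eps : R) (k : bool) (x : R * R) (T t : R) :
  0 < T <= t -> Rabs (Defs.D alpha beta x) < eps ->
  Rabs (Defs.D alpha beta (Psi alpha beta k t x)) < eps ->
  Rabs (fst x - iR k) < 2 * eps / (alpha * beta * (alpha - beta) * T).
Proof.
  intros HT Hx Ht.
  assert (Hab : 0 < alpha * beta) by nra.
  assert (Hscale : forall z, Rabs (alpha * beta * z) < eps -> Rabs z < eps / (alpha * beta)).
  { intros z Hz; rewrite Rabs_mult, (Rabs_pos_eq (alpha * beta)) in Hz by lra.
    apply (Rmult_lt_reg_l (alpha * beta)); [lra|].
    replace (alpha * beta * (eps / (alpha * beta))) with eps by (field; lra); lra. }
  rewrite D_Psi in Ht; apply Hscale in Ht.
  assert (Hnear : Rabs ((snd x - iR k) - (fst x - iR k)) < eps / (alpha * beta)).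
  { apply Hscale; rewrite <- Rabs_Ropp; unfold Defs.D in Hx.
    replace (- _) with (alpha * beta * (fst x - snd x)) by ring; exact Hx. }
  pose proof (exp_separation_bound alpha beta t _ _ _ (conj Hbeta Hbeta_alpha)
    ltac:(lra) Ht Hnear) as Hgap.
  pose proof (Rabs_pos (fst x - iR k)).
  apply (Rmult_lt_reg_r ((alpha - beta) * T)); [nra|].
  replace (2 * eps / (alpha * beta * (alpha - beta) * T) * ((alpha - beta) * T))
    with (2 * (eps / (alpha * beta))) by (field; nra).
  assert (Rabs (fst x - iR k) * ((alpha - beta) * T)
          <= Rabs (fst x - iR k) * ((alpha - beta) * t)).
  { apply Rmult_le_compat_l; nra. }
  lra.
Qed.

Definition log_offset_bound (eps : R) : R :=
  ln (2 / (alpha * beta * (alpha - beta))) + (1 - beta / alpha) * ln eps.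

Lemma exp_log_offset_bound (eps : R) : 0 < eps ->
  exp (log_offset_bound eps) =
  2 * eps / (alpha * beta * (alpha - beta) * Rpower eps (beta / alpha)).
Proof.
  intros He; unfold log_offset_bound, Rpower.
  assert (Hc : 0 < 2 / (alpha * beta * (alpha - beta))).
  { apply Rdiv_lt_0_compat; [lra|]. apply Rmult_lt_0_compat; nra. }
  replace ((1 - beta / alpha) * ln eps) with (ln eps + - (beta / alpha * ln eps)) by ring.
  rewrite !exp_plus, exp_Ropp, exp_ln, exp_ln by assumption.
  field; repeat split; try apply Rgt_not_eq, exp_pos; lra.
Qed.

Lemma log_offset_bound_small (M : R) :
  exists eta, 0 < eta /\ forall eps, 0 < eps < eta -> log_offset_bound eps < M.
Proof.
  set (c := ln (2 / (alpha * beta * (alpha - beta)))).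
  set (gam := 1 - beta / alpha).
  assert (Hgam : 0 < gam).
  { unfold gam; apply Rlt_0_minus, (Rmult_lt_reg_l alpha); [lra|].
    replace (alpha * (beta / alpha)) with beta by (field; lra); lra. }
  exists (exp ((M - c) / gam)); split; [apply exp_pos|].
  intros eps He; unfold log_offset_bound; fold c gam.
  assert (Hln : ln eps < (M - c) / gam).
  { rewrite <- (ln_exp ((M - c) / gam)); apply ln_increasing; lra. }
  apply (Rmult_lt_compat_l gam) in Hln; [|lra].
  replace (gam * ((M - c) / gam)) with (M - c) in Hln by (field; lra); lra.
Qed.

Lemma exp_log_offset_bound_small (K theta delta : R) :
  0 < K -> 0 < theta -> 0 < delta ->
  exists eta, 0 < eta /\ forall eps, 0 < eps < eta ->
    K * exp (theta * log_offset_bound eps) < delta.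
Proof.
  intros HK Htheta Hdelta.
  destruct (log_offset_bound_small (ln (delta / K) / theta)) as [eta [Heta Hsmall]].
  exists eta; split; [exact Heta|]; intros eps Heps.
  apply (Rmult_lt_reg_r (/ K)); [apply Rinv_0_lt_compat; lra|].
  replace (K * exp (theta * log_offset_bound eps) * / K)
    with (exp (theta * log_offset_bound eps)) by (field; lra).
  rewrite <- (exp_ln (delta * / K)) by (apply Rdiv_lt_0_compat; lra).
  apply exp_increasing, (Rmult_lt_reg_r (/ theta)); [apply Rinv_0_lt_compat; lra|].
  replace (theta * log_offset_bound eps * / theta) with (log_offset_bound eps)
    by (field; lra).
  apply Hsmall, Heps.
Qed.

Lemma V_tau_gt (eps : R) (k : bool) (j : nat) (x : R * R) :
  0 < eps <= 1 -> (1 <= j)%nat -> V alpha beta eps k j x ->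
  Rbar_lt (Finite (Rpower eps (beta / alpha))) (tau alpha beta eps k x) /\
  Rbar_lt (Finite (INR j - 1)) (tau alpha beta eps k x).
Proof.
  intros He Hj [_ [_ [Hlow _]]].
  assert (HT : 0 < Rpower eps (beta / alpha) <= 1).
  { unfold Rpower; split; [apply exp_pos|]; rewrite <- exp_0; apply exp_le_compat.
    assert (ln eps <= 0) by (rewrite <- ln_1; apply ln_le; lra).
    assert (0 < beta / alpha) by (apply Rdiv_lt_0_compat; lra). nra. }
  destruct (Nat.leb_spec j 1) as [Hj1|Hj2].
  - replace (INR j) with 1 by (replace j with 1%nat by lia; reflexivity).
    split; [exact Hlow|]. eapply Rbar_le_lt_trans; [|exact Hlow]; simpl; lra.
  - assert (2 <= INR j) by (apply (le_INR 2); lia).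
    split; [|exact Hlow]. eapply Rbar_le_lt_trans; [|exact Hlow]; simpl; lra.
Qed.

Lemma V_offset_bound (eps : R) (k : bool) (j : nat) (x : R * R) :
  0 < eps <= 1 -> (1 <= j)%nat -> V alpha beta eps k j x ->
  Rabs (fst x - iR k) <= exp (Rmin (log_offset_bound eps) (- alpha * (INR j - 1))).
Proof.
  intros He Hj HV.
  destruct (V_tau_gt eps k j x He Hj HV) as [HT Hj1].
  destruct (tau_gt_witnesses eps k x _ HT) as [[tD [HtD [_ HD]]] _].
  destruct (tau_gt_witnesses eps k x _ Hj1) as [_ [tG [HtG [_ HG]]]].
  apply Rmin_case.
  - rewrite exp_log_offset_bound by lra; left.
    apply (offset_lt_of_D_window eps k x _ tD); [split; [apply exp_pos|lra] | apply HV | exact HD].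
  - apply GammaInt_fst, Psi_fst_offset in HG.
    apply Rle_trans with (exp (- alpha * tG)); [|apply exp_le_compat; nra].
    rewrite Ropp_mult_distr_l_reverse, exp_Ropp.
    apply (Rmult_le_reg_r (exp (alpha * tG))); [apply exp_pos|].
    rewrite Rinv_l by apply Rgt_not_eq, exp_pos; exact HG.
Qed.

Definition escape_weight (L : R) (j : nat) : R :=
  3 / alpha * exp (Rmin L (- alpha * (INR j - 1))).

Lemma escape_weight_pos (L : R) (j : nat) : 0 < escape_weight L j.
Proof. apply Rmult_lt_0_compat; [apply Rdiv_lt_0_compat; lra | apply exp_pos]. Qed.

Lemma escape_weight_term_le (nu rho L : R) (n : nat) :
  0 <= nu -> 0 < rho -> nu + 4 * rho = alpha ->
  INR (S n) * exp (nu * INR (S n)) * escape_weight L (S n)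
  <= 3 / (alpha * rho) * exp (alpha - 3 * rho + rho / alpha * L) * exp (- 2 * rho) ^ n.
Proof.
  intros Hnu0 Hrho Hnu.
  rewrite <- exp_mul_INR; unfold escape_weight.
  set (j := INR (S n)).
  assert (Hj : j = INR n + 1) by apply S_INR.
  assert (Hn : 0 <= INR n) by apply pos_INR.
  assert (Hmin : Rmin L (- alpha * (j - 1)) <= rho / alpha * L - (alpha - rho) * INR n).
  { assert (Htheta : 0 <= rho / alpha <= 1).
    { split; [apply Rdiv_le_0_compat; lra|].
      apply (Rmult_le_reg_l alpha); [lra|].
      replace (alpha * (rho / alpha)) with rho by (field; lra); lra. }
    eapply Rle_trans; [apply (Rmin_le_convex _ _ _ Htheta)|].
    right; rewrite Hj; field; lra. }
  assert (Hjexp : j <= exp (rho * j) / rho).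
  { pose proof (exp_ineq1_le (rho * j)).
    apply (Rmult_le_reg_l rho); [lra|].
    replace (rho * (exp (rho * j) / rho)) with (exp (rho * j)) by (field; lra); lra. }
  apply Rle_trans with
    (exp (rho * j) / rho * exp (nu * j) *
     (3 / alpha * exp (rho / alpha * L - (alpha - rho) * INR n))).
  - assert (0 < 3 / alpha) by (apply Rdiv_lt_0_compat; lra).
    assert (0 <= j) by (rewrite Hj; lra).
    pose proof (exp_pos (nu * j)).
    apply Rmult_le_compat; [nra | apply Rmult_le_pos; [lra | left; apply exp_pos] |
                            apply Rmult_le_compat_r; lra |].
    apply Rmult_le_compat_l; [lra | apply exp_le_compat, Hmin].
  - right.
    replace (exp (rho * j) / rho * exp (nu * j) *
             (3 / alpha * exp (rho / alpha * L - (alpha - rho) * INR n)))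
      with (3 / (alpha * rho) *
            exp (rho * j + nu * j + (rho / alpha * L - (alpha - rho) * INR n)))
      by (rewrite !exp_plus; field; lra).
    rewrite Rmult_assoc, <- exp_plus; do 2 f_equal.
    replace nu with (alpha - 4 * rho) by lra; rewrite Hj; field; lra.
Qed.

Lemma escape_weight_series_bound (nu : R) : 0 <= nu < alpha ->
  exists K theta, 0 < K /\ 0 < theta /\
    forall L, exists s,
      is_series (fun n => INR (S n) * exp (nu * INR (S n)) * escape_weight L (S n)) s /\
      0 <= s <= K * exp (theta * L).
Proof.
  intros Hnu.
  set (rho := (alpha - nu) / 4).
  set (q := exp (- 2 * rho)).
  set (C := 3 / (alpha * rho) * exp (alpha - 3 * rho)).
  assert (Hrho : 0 < rho) by (unfold rho; lra).
  assert (Hq : 0 < q < 1).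
  { split; [apply exp_pos|]; rewrite <- exp_0; apply exp_increasing; lra. }
  assert (HC : 0 < C).
  { apply Rmult_lt_0_compat; [apply Rdiv_lt_0_compat; nra | apply exp_pos]. }
  exists (C / (1 - q)), (rho / alpha); split; [apply Rdiv_lt_0_compat; lra|].
  split; [apply Rdiv_lt_0_compat; lra|].
  intros L.
  destruct (is_series_geom_dominated
              (fun n => INR (S n) * exp (nu * INR (S n)) * escape_weight L (S n))
              (C * exp (rho / alpha * L)) q) as [s [Hs Hsb]]; [lra| |].
  - intros n; split.
    + pose proof (escape_weight_pos L (S n)); pose proof (exp_pos (nu * INR (S n))).
      pose proof (pos_INR (S n)); apply Rmult_le_pos; [apply Rmult_le_pos|]; lra.
    + eapply Rle_trans; [apply (escape_weight_term_le nu rho); unfold rho; lra|].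
      right; unfold C, q; rewrite (exp_plus (alpha - 3 * rho)); ring.
  - exists s; split; [exact Hs|].
    replace (C / (1 - q) * exp (rho / alpha * L)) with (C * exp (rho / alpha * L) / (1 - q))
      by (field; lra); exact Hsb.
Qed.

End Flow.

Theorem lemma7p10 (alpha beta : R) (Hb : 0 < beta) (Hab : beta < alpha) :
  exists m : R -> nat -> R,
    (forall eps j, 0 < eps -> (1 <= j)%nat -> 0 <= m eps j) /\
    (exists eps0 : R, 0 < eps0 /\
       forall eps, 0 < eps < eps0 ->
       forall (j : nat), (1 <= j)%nat ->
       forall (i : bool) (x : R * R),
         V alpha beta eps (negb i) j x ->
         Rbar_lt (tau alpha beta eps i x) (Finite (m eps j))) /\
    (forall nu : R, 0 <= nu < alpha ->
       forall delta : R, 0 < delta ->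
       exists eta : R, 0 < eta /\
         forall eps, 0 < eps < eta ->
           exists s : R,
             is_series (fun n : nat => INR (S n) * exp (nu * INR (S n)) * m eps (S n)) s
             /\ Rabs s < delta).
Proof.
  exists (fun eps j => escape_weight alpha (log_offset_bound alpha beta eps) j).
  split; [|split].
  - intros eps j _ _; left; apply (escape_weight_pos alpha beta Hb Hab).
  - destruct (exp_log_offset_bound_small alpha beta Hb Hab 1 1 (1 / 2))
      as [eta [Heta Hsmall]]; try lra.
    exists (Rmin 1 eta); split; [apply Rmin_pos; lra|].
    intros eps Heps j Hj i x HV.
    pose proof (Rmin_l 1 eta); pose proof (Rmin_r 1 eta).
    assert (Hhalf : exp (log_offset_bound alpha beta eps) < 1 / 2).
    { rewrite <- (Rmult_1_l (log_offset_bound _ _ _)), <- (Rmult_1_l (exp _)).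
      apply Hsmall; lra. }
    apply (tau_lt_of_offset alpha beta Hb Hab); [apply HV | |].
    + apply (V_offset_bound alpha beta Hb Hab eps _ j); [lra | assumption | exact HV].
    + split; [apply exp_pos|].
      eapply Rle_trans; [apply exp_le_compat, Rmin_l | lra].
  - intros nu Hnu delta Hdelta.
    destruct (escape_weight_series_bound alpha beta Hb Hab nu Hnu)
      as [K [theta [HK [Htheta Hseries]]]].
    destruct (exp_log_offset_bound_small alpha beta Hb Hab K theta delta HK Htheta Hdelta)
      as [eta [Heta Hsmall]].
    exists eta; split; [exact Heta|]; intros eps Heps.
    destruct (Hseries (log_offset_bound alpha beta eps)) as [s [Hs Hsb]].
    exists s; split; [exact Hs|].
    specialize (Hsmall eps Heps); rewrite Rabs_pos_eq; lra.
Qed.
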